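(* Let $(V,\langle\cdot,\cdot\rangle)$ be a pseudo-Euclidean real vector space of signature $(k,l)$ with $k\ge2$, $l\ge2$, and let $Z\subseteq V$ be a subspace with $q^+(Z)\ge1$. Then the following are equivalent: (i) $q^+(Z^\perp)=0$; (ii) every positive $(k-1)$-plane $H\subseteq V$ which is $Z$-extendable is also $Z$-orthogonally-extendable.
   Context: A pseudo-Euclidean space of signature $(k,l)$ is a finite-dimensional real vector space with a symmetric non-degenerate bilinear form whose Sylvester diagonal form has $k$ entries $+1$ and $l$ entries $-1$. For a subspace $L$, $q^+(L)$ denotes the number of $+1$'s in a diagonalization of the restriction of the form to $L$ (the maximal dimension of a positive definite subspace of $L$), and $L^\perp$ is the orthogonal complement. A positive $r$-plane is an $r$-dimensional subspace on which the form is positive definite. For a subspace $Z$ and a positive $(k-1)$-plane $H$: $H$ is $Z$-extendable if there is $z\in Z$ with $H+\mathbb{R}z$ a positive $k$-plane; $H$ is $Z$-orthogonally-extendable if there is $z\in Z\cap H^\perp$ with $H+\mathbb{R}z$ a positive $k$-plane. *)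

(* A pseudo-Euclidean space of dimension n is modelled as
   'rV[R]_n with the bilinear form <u,v> = u G v^T for a symmetric invertible
   Gram matrix G; subspaces are row spaces of matrices (mxalgebra). *)
From HB Require Import structures.
From mathcomp Require Import all_boot all_order all_algebra.
Set Implicit Arguments. Unset Strict Implicit. Unset Printing Implicit Defensive.
Import Order.TTheory GRing.Theory Num.Theory.
Local Open Scope ring_scope.

Section PE.
Variables (R : rcfType) (n : nat).

Definition form (G : 'M[R]_n) (u v : 'rV[R]_n) : R := (u *m G *m v^T) 0 0.

Definition posdef {m} (G : 'M[R]_n) (P : 'M[R]_(m, n)) : Prop :=
  forall v : 'rV[R]_n, (v <= P)%MS -> v != 0 -> 0 < form G v v.

Definition inspace {m} (Z : 'M[R]_(m, n)) : 'rV[R]_n -> Prop :=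
  fun v => (v <= Z)%MS.

Definition perp {m} (G : 'M[R]_n) (Z : 'M[R]_(m, n)) : 'rV[R]_n -> Prop :=
  fun v => forall z : 'rV[R]_n, (z <= Z)%MS -> form G v z = 0.

Definition qplus_is (G : 'M[R]_n) (L : 'rV[R]_n -> Prop) (d : nat) : Prop :=
  (exists P : 'M[R]_n, (forall v, (v <= P)%MS -> L v) /\ posdef G P /\ \rank P = d)
  /\ (forall P : 'M[R]_n, (forall v, (v <= P)%MS -> L v) -> posdef G P -> (\rank P <= d)%N).

Definition pos_plane {m} (G : 'M[R]_n) (r : nat) (H : 'M[R]_(m, n)) : Prop :=
  \rank H = r /\ posdef G H.

Definition Z_extendable {m p} (G : 'M[R]_n) (k : nat) (Z : 'M[R]_(p, n))
  (H : 'M[R]_(m, n)) : Prop :=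
  exists z : 'rV[R]_n, (z <= Z)%MS /\ pos_plane G k (col_mx H z).

Definition Z_orth_extendable {m p} (G : 'M[R]_n) (k : nat) (Z : 'M[R]_(p, n))
  (H : 'M[R]_(m, n)) : Prop :=
  exists z : 'rV[R]_n, (z <= Z)%MS /\ perp G H z /\ pos_plane G k (col_mx H z).

End PE.

From Pilot Require Import Defs.
From HB Require Import structures.
From mathcomp Require Import all_boot all_order all_algebra.
From mathcomp Require Import ring lra zify.
From Stdlib Require Import Classical.
Import Order.TTheory GRing.Theory Num.Theory.
Local Open Scope ring_scope.
Set Implicit Arguments. Unset Strict Implicit. Unset Printing Implicit Defensive.

Local Notation form := Defs.form.

(* (i) -> (ii): given H and z, let W = Z :&: H^perp. A vector of Z^perp :&: W
   is isotropic and orthogonal to the maximal positive plane H + z, hence zero.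
   So if W had no positive vector, Z^perp + W would be a nonpositive subspace
   of dimension n - k + 1, impossible in positive index k; a positive vector of
   W extends H orthogonally.
   (ii) -> (i): if y in Z^perp is positive, pick a maximal positive subspace A
   of Z, a nonzero a in A, and extend A + y to a positive k-plane Q. The
   hyperplane H = Q :&: (y - a)^perp of Q is Z-extendable by a and Q = H + y.
   An orthogonal extension z in Z of H is orthogonal to y, hence to A, so
   A + z is a positive subspace of Z larger than A. *)

Section PseudoEuclidean.
Variables (R : rcfType) (n : nat) (G : 'M[R]_n).
Hypothesis G_sym : G^T = G.
Hypothesis G_unit : G \in unitmx.

Lemma formC u v : form G u v = form G v u.
Proof.
have E (A : 'M[R]_1) : A 0 0 = A^T 0 0 by rewrite mxE.
by rewrite /Defs.form [RHS]E !trmx_mul trmxK G_sym mulmxA.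
Qed.

Lemma formDl u v w : form G (u + v) w = form G u w + form G v w.
Proof. by rewrite /Defs.form !mulmxDl mxE. Qed.

Lemma formZl a u w : form G (a *: u) w = a * form G u w.
Proof. by rewrite /Defs.form -!scalemxAl mxE. Qed.

Lemma formDr u v w : form G w (u + v) = form G w u + form G w v.
Proof. by rewrite formC formDl !(formC w). Qed.

Lemma formZr a u w : form G w (a *: u) = a * form G w u.
Proof. by rewrite formC formZl formC. Qed.

Lemma form0l u : form G 0 u = 0.
Proof. by rewrite /Defs.form !mul0mx mxE. Qed.

Lemma form0r u : form G u 0 = 0.
Proof. by rewrite formC form0l. Qed.

Lemma formBl u v w : form G (u - v) w = form G u w - form G v w.
Proof. by rewrite formDl -scaleN1r formZl mulN1r. Qed.

Lemma formBr u v w : form G w (u - v) = form G w u - form G w v.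
Proof. by rewrite formC formBl !(formC w). Qed.

Definition perpM {m} (A : 'M[R]_(m, n)) : 'M[R]_n := kermx (G *m A^T).

Lemma perpMP m (A : 'M[R]_(m, n)) v :
  reflect (forall a, (a <= A)%MS -> form G v a = 0) (v <= perpM A)%MS.
Proof.
rewrite /perpM sub_kermx; apply: (iffP eqP) => [vA a /submxP [D ->]|vA].
  by rewrite /Defs.form trmx_mul mulmxA -(mulmxA v) vA mul0mx mxE.
apply/rowP => i; have := vA _ (row_sub i A).
by rewrite /Defs.form tr_row colE !mulmxA -colE mxE => ->; rewrite mxE.
Qed.

Lemma perpE m (A : 'M[R]_(m, n)) v : perp G A v <-> (v <= perpM A)%MS.
Proof. by split=> [vA|/perpMP //]; apply/perpMP. Qed.

Lemma sub_perpM_rows m (A : 'M[R]_(m, n)) v :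
  (v <= perpM A)%MS = [forall i, form G v (row i A) == 0].
Proof.
apply/perpMP/forallP => [vA i|vA]; first by rewrite vA ?row_sub.
apply/perpMP; rewrite /perpM sub_kermx; apply/eqP/rowP => i.
have := eqP (vA i); rewrite /Defs.form tr_row colE !mulmxA -colE mxE => ->.
by rewrite mxE.
Qed.

Lemma perpM_witness m (A : 'M[R]_(m, n)) v :
  ~~ (v <= perpM A)%MS -> exists2 a, (a <= A)%MS & form G v a != 0.
Proof.
rewrite sub_perpM_rows negb_forall => /existsP [i vi].
by exists (row i A); rewrite ?row_sub.
Qed.

Lemma perpMC m1 m2 (A : 'M[R]_(m1, n)) (B : 'M[R]_(m2, n)) :
  (A <= perpM B)%MS = (B <= perpM A)%MS.
Proof.
suff sub p1 p2 (C : 'M[R]_(p1, n)) (D : 'M[R]_(p2, n)) :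
  (C <= perpM D)%MS -> (D <= perpM C)%MS by apply/idP/idP; apply: sub.
move=> CD; apply/rV_subP => d dD; apply/perpMP => c cC.
by rewrite formC; move/perpMP: (submx_trans cC CD); apply.
Qed.

Lemma perpMS m1 m2 (A : 'M[R]_(m1, n)) (B : 'M[R]_(m2, n)) :
  (A <= B)%MS -> (perpM B <= perpM A)%MS.
Proof. by move=> AB; rewrite perpMC (submx_trans AB) // perpMC. Qed.

Lemma perpM_col_mx m1 m2 (A : 'M[R]_(m1, n)) (B : 'M[R]_(m2, n)) (v : 'rV[R]_n) :
  (v <= perpM (col_mx A B))%MS = (v <= perpM A)%MS && (v <= perpM B)%MS.
Proof. by rewrite !(perpMC v) -addsmxE addsmx_sub. Qed.

Lemma rank_perpM m (A : 'M[R]_(m, n)) : \rank (perpM A) = (n - \rank A)%N.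
Proof.
rewrite /perpM mxrank_ker -mxrank_tr trmx_mul trmxK mxrankMfree //.
by rewrite row_free_unit unitmx_tr.
Qed.

Lemma perpMK m (A : 'M[R]_(m, n)) : (perpM (perpM A) :=: A)%MS.
Proof.
have AA : (A <= perpM (perpM A))%MS by rewrite perpMC.
apply/eqmxP; rewrite /eqmx AA andbT.
have [_ <-] := mxrank_leqif_sup AA; rewrite !rank_perpM.
by apply/eqP; have := rank_leq_col A; lia.
Qed.

Definition nonposdef {m} (A : 'M[R]_(m, n)) : Prop :=
  forall v : 'rV[R]_n, (v <= A)%MS -> form G v v <= 0.

Lemma posdefS m1 m2 (A : 'M[R]_(m1, n)) (B : 'M[R]_(m2, n)) :
  (B <= A)%MS -> posdef G A -> posdef G B.
Proof. by move=> BA pA v vB; apply: pA; apply: submx_trans BA. Qed.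

Lemma posdef_rV (v : 'rV[R]_n) : 0 < form G v v -> posdef G v.
Proof.
move=> vpos _ /sub_rVP [c ->]; rewrite scaler_eq0 negb_or => /andP [c0 _].
by rewrite formZl formZr mulrA pmulr_lgt0 // -expr2 exprn_even_gt0.
Qed.

Lemma rank_col_mx_rV m (A : 'M[R]_(m, n)) (v : 'rV[R]_n) :
  ~~ (v <= A)%MS -> \rank (col_mx A v) = (\rank A).+1.
Proof.
move=> vA; have v0 : v != 0 by apply: contraNneq vA => ->; rewrite sub0mx.
have cap0 : \rank (A :&: v)%MS = 0%N.
  apply/eqP; rewrite mxrank_eq0 -submx0; apply/rV_subP => u.
  rewrite sub_capmx => /andP [uA /sub_rVP [c uc]]; rewrite submx0.
  apply: contraLR vA; rewrite uc scaler_eq0 negb_or negbK => /andP [c0 _].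
  by rewrite -(scalerK c0 v) scalemx_sub // -uc.
by have := mxrank_sum_cap A v; rewrite -addsmxE cap0 rank_rV v0; lia.
Qed.

Lemma posdef_col_mx_perp m (A : 'M[R]_(m, n)) (v : 'rV[R]_n) :
  posdef G A -> (v <= perpM A)%MS -> 0 < form G v v ->
  posdef G (col_mx A v) /\ \rank (col_mx A v) = (\rank A).+1.
Proof.
move=> pA /perpMP vA vpos; split; last first.
  by apply: rank_col_mx_rV; apply: contraTN vpos => /vA ->; rewrite ltxx.
move=> u; rewrite -addsmxE => /sub_addsmxP [[D1 D2] /= ->].
rewrite [D2]mx11_scalar mul_scalar_mx; set a := D1 *m A; set c := D2 0 0.
have aA : (a <= A)%MS := submxMl D1 A.
have [-> | a0] := eqVneq a 0.
  by rewrite add0r; apply: (posdef_rV vpos); rewrite scalemx_sub.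
rewrite formDl !formDr !formZl !formZr (formC a) vA // mulr0 !addr0 add0r.
by have := pA a aA a0; have := vpos; nra.
Qed.

Lemma capmx_posdef_nonposdef m1 m2 (P : 'M[R]_(m1, n)) (N : 'M[R]_(m2, n)) :
  posdef G P -> nonposdef N -> \rank (P :&: N)%MS = 0%N.
Proof.
move=> pP nN; apply/eqP; rewrite mxrank_eq0 -submx0; apply/rV_subP => v.
rewrite sub_capmx submx0 => /andP [vP vN]; apply: contraTT (nN v vN) => v0.
by rewrite -ltNge pP.
Qed.

Lemma nonposdef_adds_orth m1 m2 (N1 : 'M[R]_(m1, n)) (N2 : 'M[R]_(m2, n)) :
  nonposdef N1 -> nonposdef N2 -> (N2 <= perpM N1)%MS -> nonposdef (N1 + N2)%MS.
Proof.
move=> nN1 nN2 N12 _ /sub_addsmxP [[D1 D2] /= ->].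
set x1 := D1 *m N1; set x2 := D2 *m N2.
have x1N1 : (x1 <= N1)%MS := submxMl _ _.
have x2N2 : (x2 <= N2)%MS := submxMl _ _.
have /perpMP x21 := submx_trans x2N2 N12.
rewrite formDl !formDr (formC x1) x21 // add0r addr0.
by have := nN1 _ x1N1; have := nN2 _ x2N2; lra.
Qed.

Lemma qplus_perp0P m (Z : 'M[R]_(m, n)) :
  qplus_is G (perp G Z) 0 <-> nonposdef (perpM Z).
Proof.
split=> [[_ Zmax] v vZ | nZ].
  rewrite leNgt; apply/negP => vpos.
  have v0 : v != 0 by apply: contraTneq vpos => ->; rewrite form0l ltxx.
  suff : (\rank <<v>>%MS <= 0)%N by rewrite genmxE rank_rV v0.
  apply: Zmax.
  - by move=> u; rewrite genmxE => uv; apply/perpE; apply: submx_trans uv vZ.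
  - by apply: posdefS (posdef_rV vpos); rewrite genmxE.
split.
  exists 0; rewrite mxrank0; split; last first.
    by split=> // v; rewrite submx0 => /eqP ->; rewrite eqxx.
  by move=> v; rewrite submx0 => /eqP ->; apply/perpE; rewrite sub0mx.
move=> P PZ pP; rewrite leqn0 mxrank_eq0 -nz_row_eq0; apply: contraT => r0.
by have := pP _ (nz_row_sub P) r0; rewrite ltNge nZ //; apply/perpE/PZ/nz_row_sub.
Qed.

Variable k : nat.
Hypothesis hk : qplus_is G (fun _ => True) k.

Lemma rank_posdef_le m (A : 'M[R]_(m, n)) : posdef G A -> (\rank A <= k)%N.
Proof.
move=> pA; rewrite -(genmxE A); apply: hk.2 => //.
by apply: posdefS pA; rewrite genmxE.
Qed.

Lemma rank_nonposdef_le m (N : 'M[R]_(m, n)) : nonposdef N -> (\rank N <= n - k)%N.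
Proof.
move=> nN; have [P [_ [pP rP]]] := hk.1.
have := mxrank_sum_cap P N; rewrite capmx_posdef_nonposdef // rP.
by have := rank_leq_col (P + N)%MS; lia.
Qed.

Lemma isotropic_perp_maxposdef m (P : 'M[R]_(m, n)) (x : 'rV[R]_n) :
  posdef G P -> \rank P = k -> (x <= perpM P)%MS -> form G x x = 0 -> x = 0.
Proof.
move=> pP rP xP xx; apply/eqP; apply: contraT => x0.
(* x lies outside P = P^perp^perp, so it pairs with some u in P^perp, and a
   small move from x along u becomes positive *)
have [u uP xu] : exists2 u, (u <= perpM P)%MS & form G x u != 0.
  apply: perpM_witness; rewrite perpMK; by apply/negP => /pP/(_ x0); rewrite xx ltxx.
set b := form G x u in xu; set c := form G u u; set s := `|c| + 1.
have s_gt0 : 0 < s by rewrite ltr_wpDl.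
set v := x + (b / s) *: u.
have vP : (v <= perpM P)%MS by rewrite addmx_sub // scalemx_sub.
have vpos : 0 < form G v v.
  have E : s ^+ 2 * form G v v = b ^+ 2 * (2 * s + c).
    rewrite /v formDl !formDr !formZl !formZr xx (formC u x) -/b -/c.
    by field; rewrite gt_eqF.
  have : 0 < s ^+ 2 * form G v v.
    rewrite E mulr_gt0 ?exprn_even_gt0 //.
    by have := lerNnormlW (lexx `|c|); have := normr_ge0 c; rewrite /s; lra.
  by rewrite pmulr_rgt0 // exprn_gt0.
have [pPv rPv] := posdef_col_mx_perp pP vP vpos.
by have := rank_posdef_le pPv; rewrite rPv rP ltnn.
Qed.

Lemma posdef_extend m (Q : 'M[R]_(m, n)) :
  posdef G Q -> exists2 Q' : 'M[R]_n, (Q <= Q')%MS & pos_plane G k Q'.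
Proof.
move Ej : (k - \rank Q)%N => j; elim: j m Q Ej => [|j IH] m Q Ej pQ.
  exists <<Q>>%MS; rewrite ?genmxE //; split; last by apply: posdefS pQ; rewrite genmxE.
  by have := rank_posdef_le pQ; rewrite genmxE; lia.
have [P [_ [pP rP]]] := hk.1.
(* P and Q^perp meet, since their dimensions add up to more than n *)
have PQ_gt0 : (0 < \rank (P :&: perpM Q))%N.
  have := mxrank_sum_cap P (perpM Q); rewrite rank_perpM rP.
  by have := rank_leq_col (P + perpM Q)%MS; have := rank_leq_col Q; lia.
set w := nz_row (P :&: perpM Q)%MS.
have wPQ : (w <= P :&: perpM Q)%MS := nz_row_sub _.
have w0 : w != 0 by rewrite nz_row_eq0 -mxrank_eq0 -lt0n.
have [pQw rQw] := posdef_col_mx_perp pQ (submx_trans wPQ (capmxSr _ _))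
  (pP w (submx_trans wPQ (capmxSl _ _)) w0).
have Ej' : (k - \rank (col_mx Q w))%N = j by rewrite rQw; lia.
have [Q' QwQ' pQ'] := IH _ _ Ej' pQw.
by exists Q' => //; apply: submx_trans QwQ'; rewrite -addsmxE addsmxSl.
Qed.

Lemma rank_cap_perpM_rV m (Q : 'M[R]_(m, n)) (a w : 'rV[R]_n) :
  (a <= Q)%MS -> form G a w != 0 -> \rank (Q :&: perpM w)%MS = (\rank Q).-1.
Proof.
move=> aQ aw.
have a_w : ~~ (a <= perpM w)%MS by apply: contra aw => /perpMP->.
have w0 : w != 0 by apply: contraNneq aw => ->; rewrite form0r.
have a0 : a != 0 by apply: contraNneq aw => ->; rewrite form0l.
have rw : \rank (perpM w) = (n - 1)%N by rewrite rank_perpM rank_rV w0.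
have full : \rank (Q + perpM w)%MS = n.
  have [le_w_Qw eq_w_Qw] := mxrank_leqif_sup (addsmxSr Q (perpM w)).
  have : \rank (perpM w) != \rank (Q + perpM w)%MS.
    rewrite eq_w_Qw; apply: contra a_w.
    exact: submx_trans (submx_trans aQ (addsmxSl _ _)).
  by have := rank_leq_col (Q + perpM w)%MS; rewrite rw in le_w_Qw *; move/eqP; lia.
have := mxrank_sum_cap Q (perpM w); rewrite full rw.
have := rank_leq_col Q.
by have := mxrankS aQ; rewrite rank_rV a0; lia.
Qed.

Lemma sub_adds_cap_perpM m (Q : 'M[R]_(m, n)) (y w : 'rV[R]_n) :
  (y <= Q)%MS -> form G y w != 0 -> (Q <= col_mx (Q :&: perpM w)%MS y)%MS.
Proof.
move=> yQ yw; rewrite -addsmxE; apply/rV_subP => x xQ.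
set c := form G x w / form G y w.
rewrite -(subrK (c *: y) x) addmx_sub_adds ?scalemx_sub // sub_capmx.
rewrite addmx_sub ?eqmx_opp ?scalemx_sub //=.
by apply/perpMP => _ /sub_rVP [e ->]; rewrite formZr formBl formZl mulfVK // subrr mulr0.
Qed.

Lemma extendable_hyperplane m (A : 'M[R]_(m, n)) (a y : 'rV[R]_n) :
  posdef G A -> (a <= A)%MS -> a != 0 -> (y <= perpM A)%MS -> 0 < form G y y ->
  exists H : 'M[R]_n,
    [/\ pos_plane G k.-1 H, pos_plane G k (col_mx H a) & (A <= col_mx H y)%MS].
Proof.
move=> pA aA a0 yA ypos.
have [pAy _] := posdef_col_mx_perp pA yA ypos.
have [Q AyQ [rQ pQ]] := posdef_extend pAy.
have AQ : (A <= Q)%MS by apply: submx_trans AyQ; rewrite -addsmxE addsmxSl.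
have yQ : (y <= Q)%MS by apply: submx_trans AyQ; rewrite -addsmxE addsmxSr.
have aQ := submx_trans aA AQ.
have ay : form G a y = 0 by rewrite formC; move/perpMP: yA; apply.
(* w pairs nontrivially with both a and y, so H := Q :&: w^perp satisfies
   Q = H + a = H + y *)
set w := y - a.
have aw : form G a w != 0 by rewrite formBr ay sub0r oppr_eq0 gt_eqF // pA.
have yw : form G y w != 0 by rewrite formBr (formC y) ay subr0 gt_eqF.
exists (Q :&: perpM w)%MS; split.
- split; first by rewrite (rank_cap_perpM_rV aQ aw) rQ.
  by apply: posdefS pQ; apply: capmxSl.
- split; last by apply: posdefS pQ; rewrite -addsmxE addsmx_sub capmxSl.
  have k_gt0 : (0 < k)%N by rewrite -rQ (leq_trans _ (mxrankS aQ)) // rank_rV a0.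
  rewrite rank_col_mx_rV ?(rank_cap_perpM_rV aQ aw) ?rQ ?prednK //.
  by apply: contra aw => /(submx_trans)/(_ (capmxSr _ _))/perpMP->.
- exact: submx_trans AQ (sub_adds_cap_perpM yQ yw).
Qed.

Hypothesis k_gt0 : (0 < k)%N.

Lemma not_nonposdef_cap_perpM (Z H : 'M[R]_n) (z : 'rV[R]_n) :
  nonposdef (perpM Z) -> \rank H = k.-1 -> (z <= Z)%MS -> pos_plane G k (col_mx H z) ->
  ~ nonposdef (Z :&: perpM H)%MS.
Proof.
(* Z^perp + W would be a nonpositive subspace of dimension n - k + 1 *)
move=> nZ rH zZ [rP pP] nW; set W := (Z :&: perpM H)%MS.
have WZ : (W <= Z)%MS := capmxSl _ _.
have ZW0 : \rank (perpM Z :&: W)%MS = 0%N.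
  apply/eqP; rewrite mxrank_eq0 -submx0; apply/rV_subP => x.
  rewrite !sub_capmx submx0 => /and3P [xZ' xZ xH]; apply/eqP.
  apply: (isotropic_perp_maxposdef pP rP); last by move/perpMP: xZ'; apply.
  by rewrite perpM_col_mx xH perpMC (submx_trans zZ) // perpMC.
have nN : nonposdef (perpM Z + W)%MS.
  by apply: nonposdef_adds_orth => //; rewrite (submx_trans WZ) // perpMC.
have := rank_nonposdef_le nN.
have := mxrank_sum_cap (perpM Z) W; rewrite ZW0 rank_perpM.
have := mxrank_sum_cap Z (perpM H); rewrite -/W rank_perpM rH.
have := rank_leq_col (Z + perpM H)%MS; have := rank_leq_col Z.
by have := rank_leq_col (col_mx H z); rewrite rP; lia.
Qed.

Lemma orth_extendable_of_nonposdef_perpM (Z H : 'M[R]_n) :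
  nonposdef (perpM Z) -> pos_plane G k.-1 H -> Z_extendable G k Z H ->
  Z_orth_extendable G k Z H.
Proof.
move=> nZ [rH pH] [z [zZ pHz]].
have [v vW vpos] : exists2 v, (v <= Z :&: perpM H)%MS & 0 < form G v v.
  apply: NNPP => noW; apply: (not_nonposdef_cap_perpM nZ rH zZ pHz) => v vW.
  by rewrite leNgt; apply/negP => vpos; apply: noW; exists v.
move: vW; rewrite sub_capmx => /andP [vZ vH].
have [pHv rHv] := posdef_col_mx_perp pH vH vpos.
by exists v; do !split => //; [apply/perpE | rewrite rHv rH prednK].
Qed.

Lemma nonposdef_perpM_of_orth_extendable (Z : 'M[R]_n) d :
  (0 < d)%N -> qplus_is G (inspace Z) d ->
  (forall H : 'M[R]_n, pos_plane G k.-1 H ->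
     Z_extendable G k Z H -> Z_orth_extendable G k Z H) ->
  nonposdef (perpM Z).
Proof.
move=> d_gt0 [[A [AZ [pA rA]]] Amax] orth y yZ; rewrite leNgt; apply/negP => ypos.
have AsZ : (A <= Z)%MS by apply/rV_subP.
set a := nz_row A.
have aA : (a <= A)%MS := nz_row_sub A.
have a0 : a != 0 by rewrite nz_row_eq0 -mxrank_eq0 rA -lt0n.
have yA : (y <= perpM A)%MS by rewrite (submx_trans yZ) ?perpMS.
have [H [[rH pH] pHa AHy]] := extendable_hyperplane pA aA a0 yA ypos.
have [z [zZ [/perpE zH [rHz pHz]]]] :=
  orth H (conj rH pH) (ex_intro _ a (conj (submx_trans aA AsZ) pHa)).
have z0 : z != 0.
  by apply/eqP => z0; move: rHz; rewrite z0 -addsmxE addsmx0 rH; lia.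
have zpos : 0 < form G z z by apply: pHz; rewrite // -addsmxE addsmxSr.
have zA : (z <= perpM A)%MS.
  apply: submx_trans (perpMS AHy).
  by rewrite perpM_col_mx zH (submx_trans zZ) // perpMC.
have [pAz rAz] := posdef_col_mx_perp pA zA zpos.
suff : (\rank <<col_mx A z>>%MS <= d)%N by rewrite genmxE rAz rA ltnn.
apply: Amax; last by apply: posdefS pAz; rewrite genmxE.
by move=> v; rewrite genmxE => /submx_trans; apply; rewrite -addsmxE addsmx_sub AsZ.
Qed.

End PseudoEuclidean.

Theorem proposition2 (R : rcfType) (n k l : nat) (G : 'M[R]_n) :
  G^T = G -> G \in unitmx ->
  qplus_is G (fun _ => True) k -> qplus_is (- G) (fun _ => True) l ->
  (2 <= k)%N -> (2 <= l)%N ->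
  forall Z : 'M[R]_n,
    (exists d, (1 <= d)%N /\ qplus_is G (inspace Z) d) ->
    (qplus_is G (perp G Z) 0 <->
     forall H : 'M[R]_n, pos_plane G k.-1 H ->
       Z_extendable G k Z H -> Z_orth_extendable G k Z H).
Proof.
(* Only [0 < k] is used; the negative index plays no role. *)
move=> G_sym G_unit hk _ k_ge2 _ Z [d [d_gt0 hZ]].
have k_gt0 : (0 < k)%N by apply: leq_trans k_ge2.
rewrite qplus_perp0P //; split=> [nZ H | orth].
- exact: orth_extendable_of_nonposdef_perpM.
- exact: nonposdef_perpM_of_orth_extendable hZ orth.
Qed.
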